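(* Let $n\geq 2$. Let $M$ be the $0/1$ matrix whose rows are indexed by the derangements $\pi$ of $\{1,\dots,n\}$, whose columns are indexed by the ordered pairs $(i,j)$ with $i,j\in\{1,\dots,n-1\}$ and $i\neq j$, and whose $(\pi,(i,j))$-entry is $1$ iff $\pi(i)=j$. Then $M$ has rank $(n-1)(n-2)$.
   Context: A derangement of $\{1,\dots,n\}$ is a permutation with no fixed points. *)

From HB Require Import structures.
From mathcomp Require Import all_boot all_order all_algebra all_fingroup.
Set Implicit Arguments. Unset Strict Implicit. Unset Printing Implicit Defensive.
Import GRing.Theory.
Local Open Scope ring_scope.

(* {1,...,n} is modelled by 'I_n = {0,...,n-1} (shift by one). *)

Definition derangements (n : nat) : {set {perm 'I_n}} :=
  [set s : {perm 'I_n} | [forall i : 'I_n, s i != i]].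

Definition offdiag_pairs (n : nat) : {set 'I_n * 'I_n} :=
  [set p : 'I_n * 'I_n | [&& (val p.1 < n.-1)%N, (val p.2 < n.-1)%N & p.1 != p.2]].

Definition derange_mx (n : nat) : 'M[rat]_(#|derangements n|, #|offdiag_pairs n|) :=
  \matrix_(r < #|derangements n|, c < #|offdiag_pairs n|)
    (if (enum_val r : {perm 'I_n}) (enum_val c).1 == (enum_val c).2 then 1 else 0).

From HB Require Import structures.
From mathcomp Require Import all_boot all_order all_algebra all_fingroup.
Set Implicit Arguments. Unset Strict Implicit. Unset Printing Implicit Defensive.
Import GRing.Theory Num.Theory.
Local Open Scope ring_scope.

(* The rank of the derangement/pair matrix M equals its number of columns,
   (n-1)(n-2): the columns of M are linearly independent.  A linear relation
   between them is a weight w on the pairs (i,j), vanishing outside the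
   off-diagonal pairs of {0,...,n-2}, such that sum_i w(i, pi i) = 0 for every
   derangement pi; we show every such weight is zero.
   - Every injective list extends to a derangement sending each entry to the
     next one (the cyclic permutation [next] of the list completed by the
     remaining points).
   - Comparing the derangement a->b->c->d->... with its composite with the
     transposition (a c) gives the exchange rule w(a,b)+w(c,d) = w(a,d)+w(c,b)
     for distinct a, b, c, d.
   - Since w vanishes on pairs involving the last point z = n-1, the exchange
     rule makes w constant on the off-diagonal pairs as soon as n >= 4.
   - For an off-diagonal (a,b), the derangement a->b->z->... then has all its
     off-diagonal arcs of weight w(a,b), and at least one of them (for n = 3,
     exactly one); hence w(a,b) = 0.
   After these facts on weights, the last section reads a row vector u with
   u M^T = 0 as such a weight; with the count of the off-diagonal pairs this
   gives the theorem. *)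

Lemma uniq3 (T : eqType) (a b c : T) :
  uniq [:: a; b; c] = [&& a != b, a != c & b != c].
Proof. by rewrite /= !inE !negb_or !andbT andbA. Qed.

Lemma uniq4 (T : eqType) (a b c d : T) :
  uniq [:: a; b; c; d] = [&& a != b, a != c, a != d, b != c, b != d & c != d].
Proof. by rewrite /= !inE !negb_or !andbT !andbA. Qed.

Lemma sum_agree_off2 (R : zmodType) (I : finType) (f g : I -> R) (a c : I) :
  a != c -> (forall i, i != a -> i != c -> f i = g i) ->
  \sum_i f i = \sum_i g i -> f a + f c = g a + g c.
Proof.
move=> ac fg.
have split_ac (h : I -> R) :
    \sum_i h i = h a + (h c + \sum_(i | (i != a) && (i != c)) h i).
  by rewrite (bigD1 a) //= (bigD1 c) 1?eq_sym.
rewrite !split_ac (eq_bigr g); last by move=> i /andP[]; apply: fg.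
by rewrite !addrA => /addIr.
Qed.

Section CyclicSuccessor.
Variable T : eqType.

Lemma next_neq (s : seq T) x :
  uniq s -> (1 < size s)%N -> x \in s -> next s x != x.
Proof.
case: s => [|y p] // Us Hs xs; rewrite next_nth xs.
have ix : (index x (y :: p) < (size p).+1)%N by rewrite -index_mem in xs.
rewrite -{2}(nth_index y xs).
have [lt_ip | ge_ip] := ltnP (index x (y :: p)) (size p).
  rewrite -[nth y p _]/(nth y (y :: p) (index x (y :: p)).+1).
  by rewrite nth_uniq //= ?ltnS // eqn_leq ltnn.
have -> : index x (y :: p) = size p by apply/eqP; rewrite eqn_leq ge_ip -ltnS ix.
rewrite nth_default // -[y]/(nth y (y :: p) 0) nth_uniq //=.
by move: Hs; rewrite eq_sym /=; case: (size p).
Qed.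

Lemma next_nth_succ (s : seq T) x0 i :
  uniq s -> (i.+1 < size s)%N -> next s (nth x0 s i) = nth x0 s i.+1.
Proof.
case: s => [|y p] // Us Hi; rewrite next_nth mem_nth ?(ltnW Hi) //.
by rewrite index_uniq ?(ltnW Hi) //= (set_nth_default x0).
Qed.

End CyclicSuccessor.

Lemma derangement_of_path n (w : seq 'I_n) x0 : uniq w -> (1 < size w)%N ->
  exists2 pi, pi \in derangements n &
    forall i, (i.+1 < size w)%N -> pi (nth x0 w i) = nth x0 w i.+1.
Proof.
move=> Uw Hw; pose s := w ++ [seq t <- enum 'I_n | t \notin w].
have Us : uniq s.
  rewrite cat_uniq Uw filter_uniq ?enum_uniq //= andbT.
  by apply/hasPn => t; rewrite mem_filter => /andP[].
have Ms t : t \in s by rewrite mem_cat mem_filter mem_enum andbT orbN.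
have ws : (size w <= size s)%N by rewrite size_cat leq_addr.
exists (perm (can_inj (prev_next Us))).
  by rewrite inE; apply/forallP => t; rewrite permE next_neq ?(leq_trans Hw).
move=> i Hi; have sw k : (k < size w)%N -> nth x0 s k = nth x0 w k.
  by move=> Hk; rewrite nth_cat Hk.
by rewrite permE -sw ?(ltnW Hi) // -sw // next_nth_succ // (leq_trans Hi).
Qed.

Lemma fresh_point n (s : seq 'I_n) : (size s < n)%N -> exists i, i \notin s.
Proof.
move=> lt_sn; apply/existsP; apply: contraLR lt_sn => /existsPn all_in.
rewrite -leqNgt -[X in (X <= _)%N]card_ord (leq_trans _ (card_size s)) //.
by apply: subset_leq_card; apply/subsetP => i _; move/negPn: (all_in i).
Qed.

Lemma uniq_covers n (s : seq 'I_n) : uniq s -> (n <= size s)%N -> forall i, i \in s.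
Proof.
move=> Us le_ns i; have sub : s \subset predT by apply/subsetP.
have card_s : #|s| = #|(predT : {pred 'I_n})|.
  apply/eqP; rewrite eqn_leq (subset_leq_card sub) (card_uniqP Us).
  by rewrite (leq_trans _ le_ns) // -[X in (_ <= X)%N]card_ord.
by rewrite ((subset_cardP card_s sub) i).
Qed.

Lemma offdiag_uniq n (z : 'I_n) x y :
  val z = n.-1 -> ((x, y) \in offdiag_pairs n) = uniq [:: x; y; z].
Proof.
move=> vz; have below (t : 'I_n) : (t < n.-1)%N = (t != z).
  have n_gt0 : (0 < n)%N := leq_ltn_trans (leq0n t) (ltn_ord t).
  by rewrite -val_eqE vz ltn_neqAle -ltnS prednK // ltn_ord andbT.
by rewrite uniq3 inE /= !below; do 3!case: (_ != _).
Qed.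

Section Exchange.
Variables (R : zmodType) (n : nat) (w : 'I_n * 'I_n -> R).
Hypothesis w_der : forall pi, pi \in derangements n -> \sum_i w (i, pi i) = 0.

(* The exchange rule, from the derangement a->b->c->d->... and its composite
   with the transposition (a c), which differ only at a and c. *)
Lemma weight_exchange a b c d : uniq [:: a; b; c; d] ->
  w (a, b) + w (c, d) = w (a, d) + w (c, b).
Proof.
move=> U; have [pi der_pi path_pi] := derangement_of_path a U isT.
have pa : pi a = b by apply: (path_pi 0%N).
have pc : pi c = d by apply: (path_pi 2%N).
move: U; rewrite uniq4 => /and5P[_ ac ad bc _].
have der_swap : (tperm a c * pi)%g \in derangements n.
  rewrite inE; apply/forallP => t; rewrite permM.
  case: tpermP => [->|->|ta tc]; first by rewrite pc eq_sym.
    by rewrite pa.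
  by move: der_pi; rewrite inE => /forallP.
have := sum_agree_off2 (f := fun i => w (i, pi i))
                       (g := fun i => w (i, (tperm a c * pi)%g i)) ac.
rewrite /= !permM tpermL tpermR pa pc; apply; last by rewrite !w_der.
by move=> i ia ic; rewrite permM tpermD // eq_sym.
Qed.

Variable z : 'I_n.
Hypotheses (w_from_z : forall i, w (z, i) = 0) (w_to_z : forall i, w (i, z) = 0).

Lemma weight_target_indep x y y' :
  uniq [:: x; y; z] -> uniq [:: x; y'; z] -> w (x, y) = w (x, y').
Proof.
move=> U U'; have [-> // | yy'] := eqVneq y y'.
have := weight_exchange (a := x) (b := y) (c := z) (d := y').
rewrite !w_from_z !addr0; apply; move: U U'.
rewrite uniq4 !uniq3 => /and3P[xy xz yz] /and3P[xy' _ y'z].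
by rewrite xy xz xy' yz yy' eq_sym y'z.
Qed.

Lemma weight_source_indep x x' y :
  uniq [:: x; y; z] -> uniq [:: x'; y; z] -> w (x, y) = w (x', y).
Proof.
move=> U U'; have [-> // | xx'] := eqVneq x x'.
have := weight_exchange (a := x) (b := z) (c := x') (d := y).
rewrite !w_to_z add0r addr0 => exch; apply/esym/exch; move: U U'.
rewrite uniq4 !uniq3 => /and3P[xy xz yz] /and3P[x'y x'z _].
by rewrite xz xx' xy eq_sym x'z eq_sym yz x'y.
Qed.

(* Hence, with a fourth point available, w is constant on pairs avoiding z:
   pass from (x,y) to (x',y') through (x,t) and (x',t), t a fresh point. *)
Lemma weight_const x y x' y' : (3 < n)%N ->
  uniq [:: x; y; z] -> uniq [:: x'; y'; z] -> w (x, y) = w (x', y').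
Proof.
move=> n4 U U'; have [t] := fresh_point (s := [:: x; x'; z]) n4.
rewrite !inE !negb_or => /and3P[tx tx' tz].
have xz : x != z by move: U; rewrite /= !inE !negb_or => /andP[/andP[_ ->]].
have x'z : x' != z by move: U'; rewrite /= !inE !negb_or => /andP[/andP[_ ->]].
have Ut : uniq [:: x; t; z] by rewrite /= !inE !negb_or eq_sym tx xz tz.
have Ut' : uniq [:: x'; t; z] by rewrite /= !inE !negb_or eq_sym tx' x'z tz.
rewrite (weight_target_indep U Ut) (weight_source_indep Ut Ut').
exact: weight_target_indep.
Qed.

End Exchange.

Section Vanishing.
Variables (R : numDomainType) (n : nat) (w : 'I_n * 'I_n -> R).
Hypothesis w_der : forall pi, pi \in derangements n -> \sum_i w (i, pi i) = 0.
Hypothesis w_out : forall p, p \notin offdiag_pairs n -> w p = 0.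

(* If all the off-diagonal arcs of a derangement through the off-diagonal
   pair (a,b) carry the weight of (a,b), this weight is zero: the sum over the
   derangement is a positive multiple of it. *)
Lemma weight_zero_of_arcs pi a b : pi \in derangements n -> pi a = b ->
  (a, b) \in offdiag_pairs n ->
  (forall i, (i, pi i) \in offdiag_pairs n -> w (i, pi i) = w (a, b)) ->
  w (a, b) = 0.
Proof.
move=> der_pi pa ab arcs.
have : \sum_(i | (i, pi i) \in offdiag_pairs n) w (a, b) = 0.
  rewrite -[RHS](w_der der_pi) big_mkcond; apply: eq_bigr => i _.
  by case: ifP => [/arcs // | /negbT /w_out].
rewrite sumr_const => /eqP; rewrite mulrn_eq0 => /orP[/eqP/card0_eq/(_ a) | /eqP //].
by rewrite unfold_in pa -(unfold_in (a, b)) ab.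
Qed.

Lemma weight_vanishes p : p \in offdiag_pairs n -> w p = 0.
Proof.
case: p => a b ab; have n_gt0 : (0 < n)%N := leq_ltn_trans (leq0n a) (ltn_ord a).
have last_lt : (n.-1 < n)%N by rewrite ltn_predL.
pose z := Ordinal last_lt.
have Uab : uniq [:: a; b; z] by rewrite -offdiag_uniq.
have arc_uniq x y : ((x, y) \in offdiag_pairs n) = uniq [:: x; y; z].
  exact: offdiag_uniq.
have [w_from_z w_to_z] : (forall i, w (z, i) = 0) /\ (forall i, w (i, z) = 0).
  by split=> i; apply: w_out; rewrite arc_uniq uniq3 eqxx /= ?andbF.
have [pi der_pi path_pi] := derangement_of_path a Uab isT.
have pa : pi a = b by apply: (path_pi 0%N).
have pb : pi b = z by apply: (path_pi 1%N).
apply: (weight_zero_of_arcs der_pi pa ab) => i.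
rewrite arc_uniq => Ui; have [n4 | n3] := ltnP 3 n.
  exact: (weight_const w_der w_from_z w_to_z n4).
have : i \in [:: a; b; z] by apply: uniq_covers.
rewrite !inE => /or3P[/eqP-> | /eqP ib | /eqP iz]; first by rewrite pa.
  by move: Ui; rewrite ib pb uniq3 eqxx /= !andbF.
by move: Ui; rewrite iz uniq3 eqxx /= andbF.
Qed.

End Vanishing.

(* There are (n-1)(n-2) off-diagonal pairs: those of S x S, S = {0,...,n-2},
   minus the n-1 diagonal ones. *)
Lemma card_offdiag n : (2 <= n)%N -> #|offdiag_pairs n| = ((n - 1) * (n - 2))%N.
Proof.
move=> hn; pose S := [set i : 'I_n | (val i < n.-1)%N].
have card_S : #|S| = n.-1.
  have -> : S = widen_ord (leq_pred n) @: [set: 'I_n.-1].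
    apply/setP => i; rewrite inE; apply/idP/imsetP => [hi | [j _ ->]].
      by exists (Ordinal hi); rewrite ?inE //; apply: val_inj.
    exact: (ltn_ord j).
  by rewrite card_imset ?cardsT ?card_ord //; move=> x y /(congr1 val) /= /val_inj.
pose D := [set p : 'I_n * 'I_n | p.1 == p.2].
have card_SD : #|setX S S :&: D| = n.-1.
  have -> : setX S S :&: D = (fun i => (i, i)) @: S.
    apply/setP => [[x y]]; rewrite !inE /=.
    apply/idP/imsetP => [/andP[/andP[hx _] /eqP <-] | [j]]; first by exists x; rewrite ?inE.
    by rewrite inE => hj [-> ->]; rewrite hj eqxx.
  by rewrite card_imset // => x y [].
have -> : offdiag_pairs n = setX S S :\: D.
  by apply/setP => [[x y]]; rewrite !inE /=; case: (x != y); rewrite ?andbT ?andbF.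
have := cardsID D (setX S S); rewrite card_SD cardsX card_S.
set k := #|_ :\: _| => sum_eq.
have -> : (n - 2 = n.-1 - 1)%N by rewrite subn1 -subn2.
by rewrite subn1 -(addKn n.-1 k) sum_eq mulnBr muln1.
Qed.

Section ColumnRelations.
Variables (n : nat) (u : 'rV[rat]_#|offdiag_pairs n|).

Definition pair_weight (p : 'I_n * 'I_n) : rat := \sum_(c | enum_val c == p) u 0 c.

Lemma pair_weightE c : pair_weight (enum_val c) = u 0 c.
Proof. by rewrite /pair_weight (big_pred1 c) // => c'; rewrite /= (inj_eq enum_val_inj). Qed.

Lemma pair_weight_out p : p \notin offdiag_pairs n -> pair_weight p = 0.
Proof.
move=> p_out; rewrite /pair_weight big_pred0 // => c.
by apply/eqP => vc; move: p_out; rewrite -vc enum_valP.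
Qed.

Lemma pair_weight_derangement pi (der_pi : pi \in derangements n) :
  \sum_i pair_weight (i, pi i) = (u *m (derange_mx n)^T) 0 (enum_rank_in der_pi pi).
Proof.
rewrite mxE /pair_weight.
under eq_bigr do rewrite big_mkcond.
rewrite exchange_big; apply: eq_bigr => c _.
rewrite !mxE enum_rankK_in //; case: (enum_val c) => x y /=.
rewrite (bigD1 x) //= big1 => [|j jx]; last by rewrite xpair_eqE eq_sym (negbTE jx).
rewrite xpair_eqE eqxx /= addr0 eq_sym.
by case: eqP; rewrite ?mulr1 ?mulr0.
Qed.

End ColumnRelations.

Theorem lemma10 (n : nat) (hn : (2 <= n)%N) :
  \rank (derange_mx n) = ((n - 1) * (n - 2))%N.
Proof.
rewrite -card_offdiag // -mxrank_tr; apply/eqP.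
apply: inj_row_free => u u_rel; apply/rowP => c; rewrite mxE -pair_weightE.
apply: weight_vanishes (enum_valP c) => [pi der_pi | p].
  by rewrite pair_weight_derangement u_rel mxE.
exact: pair_weight_out.
Qed.
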